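(* Let $n\geq 3$ and let $K\subset\mathbb{R}^n$ be an affine symmetric body of revolution admitting two different hyperplanes of revolution. Then $K$ is an ellipsoid.
   Context: A symmetric convex body $K\subset\mathbb{R}^n$ (compact, convex, nonempty interior, invariant under $x\mapsto-x$) is a symmetric body of revolution if it admits an axis of revolution: a 1-dimensional linear subspace $L$ such that every section of $K$ by an affine hyperplane $A$ orthogonal to $L$ is a closed Euclidean $(n-1)$-ball in $A$ centered at $A\cap L$ (possibly empty or a point); $L^\perp$ is the associated hyperplane of revolution. An affine symmetric body of revolution is a convex body linearly equivalent to a symmetric body of revolution; the images of an axis and its associated hyperplane under the linear equivalence are called an axis of revolution and associated hyperplane of revolution of it. An ellipsoid is a set affinely equivalent to a closed Euclidean unit ball. *)

From mathcomp Require Import all_boot.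
From Stdlib Require Import Reals.
Set Implicit Arguments. Unset Strict Implicit.
Open Scope R_scope.

Definition vec (n : nat) := 'I_n -> R.

Definition vadd n (x y : vec n) : vec n := fun i => x i + y i.
Definition vsub n (x y : vec n) : vec n := fun i => x i - y i.
Definition vscale n (a : R) (x : vec n) : vec n := fun i => a * x i.
Definition vopp n (x : vec n) : vec n := fun i => - x i.

Definition dot n (x y : vec n) : R := \big[Rplus/0]_(i < n) (x i * y i).
Definition vnorm n (x : vec n) : R := sqrt (dot x x).

Definition vset n := vec n -> Prop.

Definition convex n (K : vset n) : Prop :=
  forall x y l, K x -> K y -> 0 <= l <= 1 ->
    K (vadd (vscale l x) (vscale (1 - l) y)).
Definition closed_set n (K : vset n) : Prop :=
  forall x, (forall eps, 0 < eps -> exists y, K y /\ vnorm (vsub x y) < eps) -> K x.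
Definition bounded n (K : vset n) : Prop :=
  exists M, forall x, K x -> vnorm x <= M.
Definition nonempty_interior n (K : vset n) : Prop :=
  exists x eps, 0 < eps /\ forall y, vnorm (vsub y x) < eps -> K y.

Definition convex_body n (K : vset n) : Prop :=
  convex K /\ closed_set K /\ bounded K /\ nonempty_interior K.
Definition symmetric n (K : vset n) : Prop := forall x, K x -> K (vopp x).
Definition symmetric_convex_body n (K : vset n) : Prop :=
  convex_body K /\ symmetric K.

(* The line L = span u (u <> 0) is an axis of revolution of K: every section of K
   by an affine hyperplane {x | <x,u> = t} orthogonal to L is either empty or a
   closed Euclidean ball in that hyperplane (radius r >= 0, a point if r = 0)
   centered at the point of L on that hyperplane. *)
Definition axis_of_revolution n (K : vset n) (u : vec n) : Prop :=
  (exists i, u i <> 0) /\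
  forall t : R,
    (forall x, ~ (K x /\ dot x u = t)) \/
    exists r, 0 <= r /\
      forall x, (K x /\ dot x u = t) <->
        (dot x u = t /\ vnorm (vsub x (vscale (t / dot u u) u)) <= r).

Definition symmetric_body_of_revolution n (K : vset n) (u : vec n) : Prop :=
  symmetric_convex_body K /\ axis_of_revolution K u.

Definition lin n (A : 'I_n -> 'I_n -> R) (x : vec n) : vec n :=
  fun i => \big[Rplus/0]_(j < n) (A i j * x j).
Definition invertible n (A : 'I_n -> 'I_n -> R) : Prop :=
  exists B : 'I_n -> 'I_n -> R,
    forall x, lin B (lin A x) = x /\ lin A (lin B x) = x.

Definition image n (A : 'I_n -> 'I_n -> R) (S : vset n) : vset n :=
  fun x => exists y, S y /\ x = lin A y.
Definition same_set n (S T : vset n) : Prop := forall x, S x <-> T x.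
Definition orth_hyperplane n (u : vec n) : vset n := fun x => dot x u = 0.

(* H is an (associated) hyperplane of revolution of the affine symmetric body of
   revolution K: K = A(K0) for a linear equivalence A and a symmetric body of
   revolution K0 with axis span u, and H = A(u^perp). *)
Definition hyperplane_of_revolution n (K : vset n) (H : vset n) : Prop :=
  exists (A : 'I_n -> 'I_n -> R) (K0 : vset n) (u : vec n),
    invertible A /\ symmetric_body_of_revolution K0 u /\
    same_set K (image A K0) /\ same_set H (image A (orth_hyperplane u)).

Definition affine_symmetric_body_of_revolution n (K : vset n) : Prop :=
  exists H, hyperplane_of_revolution K H.

Definition ellipsoid n (K : vset n) : Prop :=
  exists (A : 'I_n -> 'I_n -> R) (c : vec n), invertible A /\
    same_set K (fun x => exists y, vnorm y <= 1 /\ x = vadd (lin A y) c).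

From Pilot Require Import Defs.
From HB Require Import structures.
From mathcomp Require Import all_boot.
From Stdlib Require Import Reals Lra Psatz ClassicalEpsilon FunctionalExtensionality Classical.
Set Implicit Arguments. Unset Strict Implicit.
Open Scope R_scope.

(* Write K = A1(K0) = A2(K1) with K0, K1 bodies of revolution about the lines
   spanned by u, u1, and let N = A2^-1 A1, so that K0 x <-> K1 (N x).  A point x
   lies in K0 iff its height s = <x,u> is admissible and its squared distance
   perp2 u x to the axis is at most rad0(s)^2; likewise through N with the
   height t = <x,nu> = <N x,u1>.  The hyperplanes differ, so nu is not parallel
   to u, and since n >= 3 there is z <> 0 orthogonal to u and nu.  Moving along
   z fixes both heights; comparing the two descriptions of a chord in direction
   z gives an exact identity between the two radius functions (chord_identity).
   Moving along a direction d with <d,u> = 1, <d,nu> = 0 then shows that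
   kappa * rad0(s)^2 is locally, hence globally, a quadratic polynomial
   g0 + curv * s^2 in s, so K0 is the quadric
      kappa * perp2 u x - curv * <x,u>^2 <= g0      (with curv < 0 < g0),
   an ellipsoid; its image K under A1 is then an ellipsoid too. *)

Lemma RplusA : associative Rplus. Proof. move=> x y z; ring. Qed.
Lemma RplusC : commutative Rplus. Proof. move=> x y; ring. Qed.
Lemma Rplus0l : left_id 0 Rplus. Proof. move=> x; ring. Qed.
HB.instance Definition _ := Monoid.isComLaw.Build R 0 Rplus RplusA RplusC Rplus0l.

Lemma sum_split n (F G : 'I_n -> R) :
  \big[Rplus/0]_(i < n) (F i + G i) = \big[Rplus/0]_(i < n) F i + \big[Rplus/0]_(i < n) G i.
Proof. by rewrite big_split. Qed.

Lemma sum_scal n a (F : 'I_n -> R) :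
  \big[Rplus/0]_(i < n) (a * F i) = a * \big[Rplus/0]_(i < n) F i.
Proof. by symmetry; apply: (big_morph (fun x => a * x)) => [x y|]; ring. Qed.

Lemma sum_ext n (F G : 'I_n -> R) : (forall i, F i = G i) ->
  \big[Rplus/0]_(i < n) F i = \big[Rplus/0]_(i < n) G i.
Proof. by move=> H; apply: eq_bigr => i _; apply: H. Qed.

Lemma sum_delta n (F : 'I_n -> R) (j : 'I_n) :
  \big[Rplus/0]_(i < n) (if i == j then F i else 0) = F j.
Proof. by rewrite (bigD1 j) //= eqxx big1 ?Rplus_0_r // => i /negbTE ->. Qed.

Lemma sum_ge_term n (F : 'I_n -> R) (j : 'I_n) : (forall i, 0 <= F i) ->
  F j <= \big[Rplus/0]_(i < n) F i.
Proof.
  move=> H; rewrite (bigD1 j) //=.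
  have : 0 <= \big[Rplus/0]_(i < n | i != j) F i.
  { by apply: (big_ind (fun x => 0 <= x)) => [|x y|i _]; [lra | lra | apply: H]. }
  move: (\big[Rplus/0]_(i < n | i != j) F i) => S; lra.
Qed.

Definition ebas n (j : 'I_n) : vec n := fun i => if i == j then 1 else 0.
Definition vzero n : vec n := fun _ => 0.

Lemma dot_addl n (x y w : vec n) : dot (vadd x y) w = dot x w + dot y w.
Proof. by rewrite /dot -sum_split; apply: sum_ext => i; rewrite /vadd; ring. Qed.
Lemma dot_scall n a (x w : vec n) : dot (vscale a x) w = a * dot x w.
Proof. by rewrite /dot -sum_scal; apply: sum_ext => i; rewrite /vscale; ring. Qed.
Lemma dotC n (x y : vec n) : dot x y = dot y x.
Proof. by rewrite /dot; apply: sum_ext => i; ring. Qed.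
Lemma dot_addr n (x y w : vec n) : dot w (vadd x y) = dot w x + dot w y.
Proof. by rewrite dotC dot_addl (dotC x) (dotC y). Qed.
Lemma dot_scalr n a (x w : vec n) : dot w (vscale a x) = a * dot w x.
Proof. by rewrite dotC dot_scall dotC. Qed.
Lemma dot_oppl n (x w : vec n) : dot (vopp x) w = - dot x w.
Proof.
  have -> : vopp x = vscale (-1) x.
  { by apply: functional_extensionality => i; rewrite /vopp /vscale; ring. }
  by rewrite dot_scall; ring.
Qed.
Lemma dot_subl n (x y w : vec n) : dot (vsub x y) w = dot x w - dot y w.
Proof.
  have -> : vsub x y = vadd x (vscale (-1) y).
  { by apply: functional_extensionality => i; rewrite /vsub /vadd /vscale; ring. }
  by rewrite dot_addl dot_scall; ring.
Qed.
Lemma dot_subr n (x y w : vec n) : dot w (vsub x y) = dot w x - dot w y.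
Proof. by rewrite dotC dot_subl (dotC x) (dotC y). Qed.
Lemma dot_ebas n (w : vec n) j : dot (ebas j) w = w j.
Proof.
  rewrite /dot (eq_bigr (fun i => if i == j then w i else 0)) ?sum_delta //.
  by move=> i _; rewrite /ebas; case: (i == j); ring.
Qed.

Lemma dot_ge_sq n (x : vec n) j : x j * x j <= dot x x.
Proof. by apply: (@sum_ge_term n (fun i => x i * x i) j) => i; nra. Qed.
Lemma dot_ge0 n (x : vec n) : 0 <= dot x x.
Proof.
  by rewrite /dot; apply: (big_ind (fun x => 0 <= x)) => [|a b|i _]; [lra | lra | nra].
Qed.
Lemma dot_pos n (x : vec n) : (exists i, x i <> 0) -> 0 < dot x x.
Proof.
  move=> [i Hi]; have := dot_ge_sq x i.
  have : 0 < x i * x i by nra.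
  lra.
Qed.
Lemma dot_zero n (v : vec n) : dot v v = 0 -> v = @vzero n.
Proof.
  by move=> H; apply: functional_extensionality => i; have := dot_ge_sq v i; rewrite /vzero; nra.
Qed.

Definition linf n (l : vec n -> R) : Prop :=
  (forall x y, l (vadd x y) = l x + l y) /\ (forall a x, l (vscale a x) = a * l x).

Lemma linf_repr n (l : vec n -> R) : linf l ->
  forall x, l x = \big[Rplus/0]_(j < n) (x j * l (ebas j)).
Proof.
  move=> [Ha Hs] x.
  have Hx : x = \big[@vadd n/@vzero n]_(j < n) vscale (x j) (ebas j).
  { apply: functional_extensionality => i.
    rewrite (big_morph (fun v : vec n => v i) (id1 := 0) (op1 := Rplus)) //.
    rewrite /vscale /ebas (eq_bigr (fun j => if j == i then x j else 0)) ?sum_delta //.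
    by move=> j _; case E: (i == j); rewrite eq_sym E; ring. }
  have H0 : l (@vzero n) = 0.
  { have -> : @vzero n = vscale 0 (@vzero n).
    { by apply: functional_extensionality => i; rewrite /vscale /vzero; ring. }
    by rewrite Hs; ring. }
  rewrite {1}Hx (big_morph l (id1 := 0) (op1 := Rplus) Ha H0).
  by apply: eq_bigr => j _; rewrite Hs.
Qed.

Lemma linf_dot n (l : vec n -> R) : linf l -> exists nu, forall x, l x = dot x nu.
Proof. by move=> Hl; exists (fun j => l (ebas j)) => x; rewrite (linf_repr Hl x). Qed.

Lemma lin_add n A (x y : vec n) : lin A (vadd x y) = vadd (lin A x) (lin A y).
Proof.
  by apply: functional_extensionality => i; rewrite /lin /vadd -sum_split; apply: sum_ext => j; ring.
Qed.
Lemma lin_scal n A a (x : vec n) : lin A (vscale a x) = vscale a (lin A x).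
Proof.
  by apply: functional_extensionality => i; rewrite /lin /vscale -sum_scal; apply: sum_ext => j; ring.
Qed.
Lemma lin_zero n A : lin A (@vzero n) = @vzero n.
Proof.
  have -> : @vzero n = vscale 0 (@vzero n).
  { by apply: functional_extensionality => i; rewrite /vscale /vzero; ring. }
  by rewrite lin_scal; apply: functional_extensionality => i; rewrite /vscale /vzero; ring.
Qed.

Definition mat_of n (F : vec n -> vec n) : 'I_n -> 'I_n -> R := fun i j => F (ebas j) i.

Lemma mat_of_lin n (F : vec n -> vec n) :
  (forall x y, F (vadd x y) = vadd (F x) (F y)) -> (forall a x, F (vscale a x) = vscale a (F x)) ->
  forall x, lin (mat_of F) x = F x.
Proof.
  move=> Ha Hs x; apply: functional_extensionality => i.
  have Hl : linf (fun v => F v i) by split=> [v w|a v]; [rewrite Ha | rewrite Hs].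
  by rewrite (linf_repr Hl x) /lin /mat_of; apply: sum_ext => j; ring.
Qed.

Lemma vnorm_le n (v : vec n) r : 0 <= r -> (vnorm v <= r <-> dot v v <= r * r).
Proof.
  move=> Hr; rewrite /vnorm; have H0 := dot_ge0 v; split => H.
  - have : sqrt (dot v v) * sqrt (dot v v) <= r * r.
    { by apply: Rmult_le_compat => //; apply: sqrt_pos. }
    by rewrite sqrt_sqrt.
  - by rewrite -(sqrt_square r) //; apply: sqrt_le_1_alt; lra.
Qed.

Lemma vnorm_lt n (v : vec n) r : 0 < r -> dot v v < r * r -> vnorm v < r.
Proof.
  move=> Hr H; rewrite /vnorm -(sqrt_square r); last lra.
  by apply: sqrt_lt_1_alt; split; [apply: dot_ge0 | lra].
Qed.

(* Geometry of an axis of revolution u: perp2 u x is the squared distance from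
   x to the line R u, axis_pt u s the point of that line at height <x,u> = s. *)
Definition perp2 n (u x : vec n) : R := dot x x - (dot x u * dot x u) / dot u u.
Definition axis_pt n (u : vec n) (s : R) : vec n := vscale (s / dot u u) u.

Lemma perp2_sub n (u x : vec n) : 0 < dot u u ->
  dot (vsub x (vscale (dot x u / dot u u) u)) (vsub x (vscale (dot x u / dot u u) u))
  = perp2 u x.
Proof. by move=> Hu; rewrite /perp2 !dot_subl !dot_subr !dot_scall !dot_scalr (dotC u x); field; lra. Qed.

Lemma perp2_ge0 n (u x : vec n) : 0 < dot u u -> 0 <= perp2 u x.
Proof. by move=> Hu; rewrite -perp2_sub //; apply: dot_ge0. Qed.

Lemma dot_axis_pt n (u : vec n) s : 0 < dot u u -> dot (axis_pt u s) u = s.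
Proof. by move=> Hu; rewrite /axis_pt dot_scall; field; lra. Qed.

Lemma perp2_axis_pt n (u : vec n) s : 0 < dot u u -> perp2 u (axis_pt u s) = 0.
Proof. by move=> Hu; rewrite /perp2 /axis_pt !dot_scall dot_scalr; field; lra. Qed.

Lemma perp2_opp n (u x : vec n) : perp2 u (vopp x) = perp2 u x.
Proof. by rewrite /perp2 !dot_oppl (dotC x (vopp x)) dot_oppl /Rdiv; ring. Qed.

Lemma perp2_line n (w a b : vec n) l : dot b w = 0 ->
  perp2 w (vadd a (vscale l b)) = perp2 w a + 2 * l * dot a b + l * l * dot b b.
Proof.
  by move=> Hb; rewrite /perp2 !dot_addl !dot_addr !dot_scall !dot_scalr Hb (dotC b a) /Rdiv; ring.
Qed.

Definition is_radius n (K : vset n) (u : vec n) (s rho : R) : Prop :=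
  0 <= rho /\
  forall x, (K x /\ dot x u = s) <-> (dot x u = s /\ perp2 u x <= rho * rho).

(* A chosen radius of each section (meaningful when the section is nonempty). *)
Definition radius n (K : vset n) (u : vec n) (s : R) : R :=
  epsilon (inhabits 0) (is_radius K u s).

Lemma radius_spec n (K : vset n) (u : vec n) s : axis_of_revolution K u ->
  (exists x, K x /\ dot x u = s) -> is_radius K u s (radius K u s).
Proof.
  move=> [Hu0 Hax] [x0 Hx0]; have Hu := dot_pos Hu0.
  case: (Hax s) => [Hemp | [r [Hr Hiff]]]; first by case: (Hemp x0).
  apply: epsilon_spec; exists r; split => // y; rewrite Hiff.
  split => -[H1 H2]; split => //; move: H2; rewrite vnorm_le // -H1 perp2_sub //.
Qed.

Lemma axis_char n (K : vset n) (u : vec n) : axis_of_revolution K u ->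
  forall x, K x <-> (K (axis_pt u (dot x u)) /\
                    perp2 u x <= radius K u (dot x u) * radius K u (dot x u)).
Proof.
  move=> Hax x; have Hu := dot_pos (proj1 Hax).
  split.
  - move=> Hx; have [_ Hiff] := radius_spec Hax (ex_intro _ x (conj Hx erefl)).
    have [_ H2] := proj1 (Hiff x) (conj Hx erefl); split => //.
    apply: (proj1 (proj2 (Hiff _) _)).
    by rewrite dot_axis_pt // perp2_axis_pt //; split => //; nra.
  - move=> [Ha Hp].
    have [_ Hiff] := radius_spec Hax (ex_intro _ _ (conj Ha (dot_axis_pt _ Hu))).
    by apply: (proj1 (proj2 (Hiff x) (conj erefl Hp))).
Qed.

Lemma radius_ge0 n (K : vset n) (u : vec n) s : axis_of_revolution K u ->
  K (axis_pt u s) -> 0 <= radius K u s.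
Proof.
  move=> Hax Ha; have Hu := dot_pos (proj1 Hax).
  by case: (radius_spec Hax (ex_intro _ _ (conj Ha (dot_axis_pt _ Hu)))).
Qed.

Lemma small_poly (a b g : R) : 0 < g ->
  exists dl, 0 < dl /\ forall e, Rabs e < dl -> Rabs (b * e + a * (e * e)) < g.
Proof.
  move=> Hg; set M := Rabs b + Rabs a + 1.
  have HM : 0 < M by rewrite /M; have := Rabs_pos b; have := Rabs_pos a; lra.
  exists (Rmin 1 (g / (2 * M))).
  have H1 : 0 < g / (2 * M) by apply: Rdiv_lt_0_compat; lra.
  split; first by apply: Rmin_glb_lt; lra.
  move=> e He.
  have He1 : Rabs e < 1 by apply: Rlt_le_trans He (Rmin_l _ _).
  have He2 : Rabs e < g / (2 * M) by apply: Rlt_le_trans He (Rmin_r _ _).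
  have He3 : Rabs e * M <= g / 2.
  { have : Rabs e * (2 * M) <= g / (2 * M) * (2 * M) by apply: Rmult_le_compat_r; lra.
    have -> : g / (2 * M) * (2 * M) = g by field; lra.
    lra. }
  have Hab : Rabs (b * e + a * (e * e)) <= Rabs b * Rabs e + Rabs a * (Rabs e * Rabs e).
  { by apply: Rle_trans (Rabs_triang _ _) _; rewrite !Rabs_mult; lra. }
  have He0 := Rabs_pos e.
  have : Rabs a * (Rabs e * Rabs e) <= Rabs a * Rabs e by apply: Rmult_le_compat_l; [apply: Rabs_pos | nra].
  rewrite /M in He3; nra.
Qed.

Lemma small_quad (a b c : R) : c < 0 -> exists e, 0 < e /\ c + b * e + a * (e * e) < 0.
Proof.
  move=> Hc; have [dl [Hdl Hsm]] := @small_poly a b (- c) ltac:(lra).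
  exists (dl / 2); split; first lra.
  have := Hsm (dl / 2) ltac:(rewrite Rabs_pos_eq; lra).
  move/(Rle_lt_trans _ _ _ (Rle_abs _)); lra.
Qed.

Lemma small_sq (k c : R) : 0 <= k -> 0 < c -> exists m, 0 < m /\ m * m * k <= c.
Proof.
  move=> Hk Hc; have [m [Hm Hq]] := @small_quad k 0 (- c) ltac:(lra).
  by exists m; split => //; nra.
Qed.

Lemma quad_eq (z m g b c : R) : 0 < z -> 0 < m -> 0 < g ->
  (forall l, l * l * z <= m <-> g * l * l + 2 * b * l + c <= 0) -> b = 0 /\ c = - (g * m / z).
Proof.
  move=> Hz Hm Hg H.
  set L := sqrt (m / z).
  have HmZ : 0 < m / z by apply: Rdiv_lt_0_compat.
  have HL : L * L = m / z by rewrite /L sqrt_sqrt; lra.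
  have HL0 : 0 < L by apply: sqrt_lt_R0.
  have HLz : L * L * z = m by rewrite HL; field; lra.
  clearbody L.
  (* both endpoints +-L are roots, otherwise the sublevel set would be larger *)
  have P1 : g * L * L + 2 * b * L + c <= 0 by apply H; lra.
  have P2 : g * (-L) * (-L) + 2 * b * (-L) + c <= 0 by apply H; nra.
  have Q1 : g * L * L + 2 * b * L + c = 0.
  { apply: Rle_antisym => //; apply: Rnot_lt_le => Hlt.
    have [e [He Hq]] := @small_quad g (2 * g * L + 2 * b) _ Hlt.
    have : g * (L + e) * (L + e) + 2 * b * (L + e) + c <= 0 by nra.
    move/H => Hc.
    have : L * L * z < (L + e) * (L + e) * z by apply: Rmult_lt_compat_r; nra.
    lra. }
  have Q2 : g * (-L) * (-L) + 2 * b * (-L) + c = 0.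
  { apply: Rle_antisym => //; apply: Rnot_lt_le => Hlt.
    have [e [He Hq]] := @small_quad g (2 * g * L - 2 * b) _ Hlt.
    have : g * (-L - e) * (-L - e) + 2 * b * (-L - e) + c <= 0 by nra.
    move/H => Hc.
    have : L * L * z < (-L - e) * (-L - e) * z by apply: Rmult_lt_compat_r; nra.
    lra. }
  have Hb : b = 0 by nra.
  split => //; rewrite -HLz; have : c = - (g * (L * L)) by nra.
  by move=> ->; field; lra.
Qed.

Lemma ord_neq n (k i : 'I_n) : (nat_of_ord k != nat_of_ord i)%nat -> k != i.
Proof. by move=> H; apply/negP => /eqP E; move: H; rewrite E eqxx. Qed.

Lemma third_index n (i j : 'I_n) : (2 < n)%nat -> exists k : 'I_n, k != i /\ k != j.
Proof.
  move=> Hn.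
  have H0 : (0 < n)%nat by apply: leq_trans Hn.
  have H1 : (1 < n)%nat by apply: leq_trans Hn.
  case E0: ((0 != nat_of_ord i) && (0 != nat_of_ord j))%nat.
  { by move/andP: E0 => [a b]; exists (Ordinal H0); split; apply: ord_neq. }
  case E1: ((1 != nat_of_ord i) && (1 != nat_of_ord j))%nat.
  { by move/andP: E1 => [a b]; exists (Ordinal H1); split; apply: ord_neq. }
  exists (Ordinal Hn); split; apply: ord_neq => /=; move: E0 E1;
  case: (nat_of_ord i) => [|[|[|ii]]]; case: (nat_of_ord j) => [|[|[|jj]]] //.
Qed.

Definition not_parallel n (nu u : vec n) : Prop := forall c, ~ (forall j, nu j = c * u j).

Lemma common_kernel_vector n (u nu : vec n) : (2 < n)%nat -> (exists i, u i <> 0) ->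
  not_parallel nu u -> exists z, dot z u = 0 /\ dot z nu = 0 /\ 0 < dot z z.
Proof.
  move=> Hn [i Hi] Hnot.
  set c0 := nu i / u i.
  have [j Hj] : exists j, nu j - c0 * u j <> 0.
  { apply: NNPP => Hc; apply: (Hnot c0) => j.
    by apply: NNPP => Hj; apply: Hc; exists j; lra. }
  have Hji : j != i by apply/negP => /eqP E; apply: Hj; rewrite E /c0; field; lra.
  have [k [Hki Hkj]] := third_index i j Hn.
  (* z = a e_i + b e_j + e_k, with b killing nu - c0 u and then a killing u *)
  set b := - (nu k - c0 * u k) / (nu j - c0 * u j).
  set a := - (u j * b + u k) / u i.
  set z := vadd (vadd (vscale a (ebas i)) (vscale b (ebas j))) (ebas k).
  have Hz : forall w, dot z w = a * w i + b * w j + w k by move=> w; rewrite !dot_addl !dot_scall !dot_ebas.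
  have Hu : a * u i + b * u j + u k = 0 by rewrite /a; field.
  exists z; rewrite [dot z u]Hz [dot z nu]Hz; split => //; split.
  - have Hb : b * (nu j - c0 * u j) + (nu k - c0 * u k) = 0 by rewrite /b; field.
    have Ha : a * (nu i - c0 * u i) = 0 by rewrite /c0; field.
    have -> : a * nu i + b * nu j + nu k
      = a * (nu i - c0 * u i) + (b * (nu j - c0 * u j) + (nu k - c0 * u k))
        + c0 * (a * u i + b * u j + u k) by ring.
    by rewrite Ha Hb Hu; ring.
  - have := dot_ge_sq z k.
    have -> : z k = 1.
    { rewrite /z /vadd /vscale /ebas eqxx (negbTE Hki) (negbTE Hkj).
      ring. }
    move: (dot z z) => D; lra.
Qed.

Lemma separating_vector n (u nu z : vec n) : (exists i, u i <> 0) ->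
  not_parallel nu u -> dot z u = 0 -> dot z nu = 0 ->
  exists d, dot d u = 1 /\ dot d nu = 0 /\ dot d z = 0.
Proof.
  move=> [i Hi] Hnot Hzu Hzn.
  have Hnn : 0 < dot nu nu.
  { apply: dot_pos; apply: NNPP => Hc; apply: (Hnot 0) => j.
    by apply: NNPP => Hj; apply: Hc; exists j; lra. }
  (* d is a multiple of the component of u orthogonal to nu *)
  set c := dot u nu / dot nu nu.
  set d0 := vsub u (vscale c nu).
  have Hd0n : dot d0 nu = 0 by rewrite /d0 dot_subl dot_scall /c; field; lra.
  have Hd0z : dot d0 z = 0 by rewrite /d0 dot_subl dot_scall (dotC u) (dotC nu) Hzu Hzn; ring.
  have Hdd : dot d0 d0 = dot d0 u by rewrite {2}/d0 dot_subr dot_scalr Hd0n; ring.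
  have Hpos : 0 < dot d0 d0.
  { apply: dot_pos; apply: NNPP => Hc.
    have Hall : forall j, u j = c * nu j.
    { by move=> j; apply: NNPP => Hj; apply: Hc; exists j; rewrite /d0 /vsub /vscale; lra. }
    case: (Req_dec c 0) => Hc0.
    - by apply: Hi; rewrite Hall Hc0; ring.
    - by apply: (Hnot (/ c)) => j; rewrite Hall; field; lra. }
  exists (vscale (/ dot d0 u) d0).
  by rewrite !dot_scall Hd0n Hd0z -Hdd; split; [field; lra | split; ring].
Qed.

Lemma lub_approx (A : R -> Prop) m dl : is_lub A m -> 0 < dl -> exists x, A x /\ m - dl < x.
Proof.
  move=> [_ Hlub] Hdl; apply: NNPP => Hn.
  have : m <= m - dl.
  { by apply: Hlub => x HAx; apply: Rnot_lt_le => Hlt; apply: Hn; exists x; split => //; lra. }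
  lra.
Qed.

Section TwoAxes.
Variables (n : nat) (K0 K1 : vset n) (u u1 nu z d : vec n) (N : vec n -> vec n).
Hypothesis K0_convex : Defs.convex K0.
Hypothesis K0_closed : Defs.closed_set K0.
Hypothesis K0_bounded : Defs.bounded K0.
Hypothesis K0_interior : nonempty_interior K0.
Hypothesis K0_symmetric : Defs.symmetric K0.
Hypothesis axis0 : axis_of_revolution K0 u.
Hypothesis axis1 : axis_of_revolution K1 u1.
Hypothesis K0_K1 : forall x, K0 x <-> K1 (N x).
Hypothesis N_add : forall x y, N (vadd x y) = vadd (N x) (N y).
Hypothesis N_scal : forall a x, N (vscale a x) = vscale a (N x).
Hypothesis N_height : forall x, dot (N x) u1 = dot x nu.
Hypothesis z_u : dot z u = 0.
Hypothesis z_nu : dot z nu = 0.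
Hypothesis z_pos : 0 < dot z z.
Hypothesis Nz_pos : 0 < dot (N z) (N z).
Hypothesis d_u : dot d u = 1.
Hypothesis d_nu : dot d nu = 0.
Hypothesis d_z : dot d z = 0.

Let uu_pos : 0 < dot u u := dot_pos (proj1 axis0).

Definition rad0 s := radius K0 u s.
Definition rad1 t := radius K1 u1 t.
Definition adm0 s := K0 (axis_pt u s).
Definition adm1 t := K1 (axis_pt u1 t).
Definition perp2N x := perp2 u1 (N x).

Lemma K0_char x : K0 x <-> (adm0 (dot x u) /\ perp2 u x <= rad0 (dot x u) * rad0 (dot x u)).
Proof. exact: axis_char axis0 x. Qed.

Lemma K0_char1 x : K0 x <-> (adm1 (dot x nu) /\ perp2N x <= rad1 (dot x nu) * rad1 (dot x nu)).
Proof. by rewrite K0_K1 (axis_char axis1 (N x)) N_height. Qed.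

Lemma rad0_ge0 s : adm0 s -> 0 <= rad0 s.
Proof. exact: radius_ge0 axis0. Qed.

Lemma height_line x l : dot (vadd x (vscale l z)) u = dot x u.
Proof. by rewrite dot_addl dot_scall z_u; ring. Qed.
Lemma height1_line x l : dot (vadd x (vscale l z)) nu = dot x nu.
Proof. by rewrite dot_addl dot_scall z_nu; ring. Qed.
Lemma perp2_zline x l : dot x z = 0 -> perp2 u (vadd x (vscale l z)) = perp2 u x + l * l * dot z z.
Proof. by move=> Hx; rewrite perp2_line // Hx; ring. Qed.
Lemma perp2N_zline x l :
  perp2N (vadd x (vscale l z)) = perp2N x + 2 * l * dot (N x) (N z) + l * l * dot (N z) (N z).
Proof. by rewrite /perp2N N_add N_scal perp2_line // N_height z_nu. Qed.

(* Chord identity: for an interior point x of its K0-section with x _|_ z, the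
   chord of K0 through x in direction z is seen in both descriptions, which
   forces r1(t)^2 - perp2N x = kappa (r0(s)^2 - perp2 u x). *)
Lemma chord_identity x : dot x z = 0 -> adm0 (dot x u) ->
  perp2 u x < rad0 (dot x u) * rad0 (dot x u) ->
  adm1 (dot x nu) /\
  rad1 (dot x nu) * rad1 (dot x nu) - perp2N x
  = dot (N z) (N z) / dot z z * (rad0 (dot x u) * rad0 (dot x u) - perp2 u x).
Proof.
  move=> Hxz HE Hlt.
  have [HE1 _] := proj1 (K0_char1 x) (proj2 (K0_char x) (conj HE (Rlt_le _ _ Hlt))).
  split => //.
  set m := rad0 (dot x u) * rad0 (dot x u) - perp2 u x.
  have Hm : 0 < m by rewrite /m; lra.
  have Hq : forall l, l * l * dot z z <= m <->
     dot (N z) (N z) * l * l + 2 * dot (N x) (N z) * l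
     + (perp2N x - rad1 (dot x nu) * rad1 (dot x nu)) <= 0.
  { move=> l.
    have H0 := K0_char (vadd x (vscale l z)); have H1 := K0_char1 (vadd x (vscale l z)).
    rewrite height_line perp2_zline // in H0; rewrite height1_line perp2N_zline in H1.
    split => H.
    - have : K0 (vadd x (vscale l z)) by apply/H0; split => //; rewrite /m in H; lra.
      by move/H1 => [_ h]; lra.
    - have : K0 (vadd x (vscale l z)) by apply/H1; split => //; lra.
      by move/H0 => [_ h]; rewrite /m; lra. }
  have [_ Hc] := @quad_eq _ _ _ _ _ z_pos Hm Nz_pos Hq.
  by rewrite /m in Hc *; lra.
Qed.

Lemma interior_transfer x : dot x z = 0 -> adm1 (dot x nu) ->
  perp2N x < rad1 (dot x nu) * rad1 (dot x nu) ->
  adm0 (dot x u) /\ perp2 u x < rad0 (dot x u) * rad0 (dot x u).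
Proof.
  move=> Hxz HE1 Hlt.
  have [l [Hl Hq]] := @small_quad (dot (N z) (N z)) (2 * dot (N x) (N z))
                        (perp2N x - rad1 (dot x nu) * rad1 (dot x nu)) ltac:(lra).
  have : K0 (vadd x (vscale l z)) by apply/K0_char1; rewrite height1_line perp2N_zline; split => //; nra.
  move/K0_char; rewrite height_line perp2_zline // => -[HE Hle]; split => //.
  have : 0 < l * l * dot z z by apply: Rmult_lt_0_compat => //; nra.
  lra.
Qed.

Definition thick s := adm0 s /\ 0 < rad0 s.
Definition kappa := dot (N z) (N z) / dot z z.
Definition wrad s := kappa * (rad0 s * rad0 s).

Definition probe s m : vec n := vadd (axis_pt u s) (vscale m z).

Lemma kappa_pos : 0 < kappa.
Proof. exact: Rdiv_lt_0_compat. Qed.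

Lemma axis_pt_z s : dot (axis_pt u s) z = 0.
Proof. by rewrite /axis_pt dot_scall (dotC u) z_u; ring. Qed.

Lemma probe_char s m : K0 (probe s m) <-> (adm0 s /\ m * m * dot z z <= rad0 s * rad0 s).
Proof.
  by rewrite K0_char /probe height_line dot_axis_pt // perp2_zline ?axis_pt_z // perp2_axis_pt // Rplus_0_l.
Qed.

Lemma probe0 s : probe s 0 = axis_pt u s.
Proof. by apply: functional_extensionality => i; rewrite /probe /vadd /vscale; ring. Qed.

Lemma probe_comb th s1 m1 s2 m2 :
  vadd (vscale th (probe s1 m1)) (vscale (1 - th) (probe s2 m2))
  = probe (th * s1 + (1 - th) * s2) (th * m1 + (1 - th) * m2).
Proof.
  by apply: functional_extensionality => i; rewrite /probe /axis_pt /vadd /vscale; field; lra.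
Qed.

Lemma thick_of_probe s m : K0 (probe s m) -> m <> 0 -> thick s.
Proof.
  move/probe_char => [HE Hle] Hm; split => //.
  have := rad0_ge0 HE; have : 0 < m * m * dot z z by apply: Rmult_lt_0_compat => //; nra.
  move: (rad0 s) Hle => rs Hle; nra.
Qed.

Lemma thick_probe s : thick s -> exists m, 0 < m /\ K0 (probe s m).
Proof.
  move=> [HE Hr]; have [m [Hm Hmz]] := @small_sq (dot z z) (rad0 s * rad0 s) ltac:(lra) ltac:(nra).
  by exists m; split => //; apply/probe_char.
Qed.

(* K0, being symmetric and convex with nonempty interior, contains a ball
   around the origin. *)
Lemma K0_ball : exists e, 0 < e /\ forall y, dot y y < e * e -> K0 y.
Proof.
  have [x0 [e [He Hb]]] := K0_interior.
  exists e; split => // y Hy.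
  have Hopp : dot (vopp y) (vopp y) = dot y y by rewrite dot_oppl dotC dot_oppl; ring.
  have H1 : K0 (vadd x0 y).
  { apply: Hb; have -> : vsub (vadd x0 y) x0 = y.
    { by apply: functional_extensionality => i; rewrite /vsub /vadd; ring. }
    exact: vnorm_lt. }
  have H2 : K0 (vopp (vsub x0 y)).
  { apply: K0_symmetric; apply: Hb; have -> : vsub (vsub x0 y) x0 = vopp y.
    { by apply: functional_extensionality => i; rewrite /vsub /vopp; ring. }
    by apply: vnorm_lt; rewrite ?Hopp. }
  have := K0_convex H1 H2 (l := 1/2).
  have -> : vadd (vscale (1/2) (vadd x0 y)) (vscale (1 - 1/2) (vopp (vsub x0 y))) = y.
  { by apply: functional_extensionality => i; rewrite /vadd /vscale /vopp /vsub; field. }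
  by apply; lra.
Qed.

Lemma K0_probe0 : exists m, 0 < m /\ K0 (probe 0 m).
Proof.
  have [e [He Hb]] := K0_ball.
  have [m [Hm Hmz]] := @small_sq (dot z z) (e * e / 2) ltac:(lra) ltac:(nra).
  exists m; split => //; apply: Hb.
  have -> : probe 0 m = vscale m z.
  { by apply: functional_extensionality => i; rewrite /probe /axis_pt /vadd /vscale; field; lra. }
  by rewrite dot_scall dot_scalr; nra.
Qed.

Lemma thick0 : thick 0.
Proof. by have [m [Hm HK]] := K0_probe0; apply: (thick_of_probe HK); lra. Qed.

Lemma adm0_0 : adm0 0.
Proof. by have [e [He Hb]] := K0_ball; apply: Hb; rewrite /axis_pt dot_scall dot_scalr; nra. Qed.

Lemma thick_down s1 s : thick s1 -> 0 <= s <= s1 -> thick s.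
Proof.
  move=> Hp Hs; case: (Req_dec s 0) => [->|Hs0]; first exact: thick0.
  have [m [Hm HK]] := thick_probe Hp.
  have HK0 : K0 (probe 0 0) by rewrite probe0; exact: adm0_0.
  have Hs1 : 0 < s1 by lra.
  have Hth : 0 <= s / s1 <= 1.
  { split; first by apply: Rmult_le_pos; [lra | apply: Rlt_le; apply: Rinv_0_lt_compat; lra].
    by apply: (Rmult_le_reg_r s1) => //; rewrite /Rdiv Rmult_assoc Rinv_l; lra. }
  have := K0_convex HK HK0 Hth; rewrite probe_comb.
  have -> : s / s1 * s1 + (1 - s / s1) * 0 = s by field; lra.
  move/thick_of_probe; apply.
  have : 0 < s / s1 by apply: Rdiv_lt_0_compat; lra.
  nra.
Qed.

Lemma thick_of_adm s th : adm0 s -> 0 <= th < 1 -> thick (th * s).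
Proof.
  move=> HE Hth; have [m [Hm HK]] := K0_probe0.
  have HKs : K0 (probe s 0) by rewrite probe0.
  have := K0_convex HKs HK (l := th); rewrite probe_comb.
  have -> : th * s + (1 - th) * 0 = th * s by ring.
  by move/(_ ltac:(lra))/thick_of_probe; apply; nra.
Qed.

(* Moving from the axis point at height s along d: the height becomes s + e,
   the K1-height is unchanged, and both squared distances are quadratic in e
   with the coefficients below. *)
Definition psi_d := dot d d - 1 / dot u u.
Definition w_ud := dot (N u) (N d) / dot u u.
Definition w_dd := dot (N d) (N d).
Definition curv := kappa * psi_d - w_dd.
Definition xd s e := vadd (axis_pt u s) (vscale e d).

Lemma xd_z s e : dot (xd s e) z = 0.
Proof. by rewrite /xd dot_addl dot_scall axis_pt_z d_z; ring. Qed.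
Lemma xd_height s e : dot (xd s e) u = s + e.
Proof. by rewrite /xd dot_addl dot_scall dot_axis_pt // d_u; ring. Qed.
Lemma xd_height1 s e : dot (xd s e) nu = dot (axis_pt u s) nu.
Proof. by rewrite /xd dot_addl dot_scall d_nu; ring. Qed.
Lemma xd_perp2 s e : perp2 u (xd s e) = e * e * psi_d.
Proof.
  rewrite /perp2 /xd /psi_d /axis_pt !dot_addl !dot_addr !dot_scall !dot_scalr (dotC u d) d_u.
  by field; lra.
Qed.
Lemma xd_perp2N s e : perp2N (xd s e) = perp2N (axis_pt u s) + 2 * e * s * w_ud + e * e * w_dd.
Proof.
  rewrite /perp2N /xd N_add N_scal perp2_line; last by rewrite N_height.
  by rewrite /axis_pt N_scal dot_scall /w_ud /w_dd; field; lra.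
Qed.

Lemma local_step s : thick s -> exists dl, 0 < dl /\ forall e, Rabs e < dl ->
  thick (s + e) /\ wrad (s + e) = wrad s + e * e * curv - 2 * e * s * w_ud.
Proof.
  move=> [HE Hr].
  have [HE1 Hid] := chord_identity (axis_pt_z s)
    ltac:(rewrite dot_axis_pt //) ltac:(rewrite perp2_axis_pt // dot_axis_pt //; nra).
  rewrite perp2_axis_pt // dot_axis_pt // Rminus_0_r -/kappa in Hid.
  have HG : 0 < wrad s by apply: Rmult_lt_0_compat; [exact: kappa_pos | nra].
  have [dl [Hdl Hsm]] := @small_poly w_dd (2 * s * w_ud) (wrad s) HG.
  exists dl; split => // e He.
  (* xd s e is interior for K1, hence for K0 *)
  have Hin1 : perp2N (xd s e) < rad1 (dot (xd s e) nu) * rad1 (dot (xd s e) nu).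
  { rewrite xd_perp2N xd_height1.
    have := Rle_lt_trans _ _ _ (Rle_abs _) (Hsm e He); rewrite /wrad in Hid *; lra. }
  have [HEe Hlte] := interior_transfer (xd_z s e) ltac:(rewrite xd_height1 //) Hin1.
  rewrite xd_height in HEe Hlte.
  have Hr0 := rad0_ge0 HEe.
  have Hps := perp2_ge0 (xd s e) uu_pos.
  split; first by split => //; move: (rad0 (s + e)) Hr0 Hlte => rs Hr0 Hlte; nra.
  have [_ Hid2] := chord_identity (xd_z s e) ltac:(rewrite xd_height //) ltac:(rewrite xd_height //).
  rewrite xd_height xd_height1 xd_perp2 xd_perp2N -/kappa in Hid2.
  by rewrite /wrad /curv; nra.
Qed.

(* Composing two local steps from 0 forces curv = - w_ud. *)
Lemma curv_eq : curv = - w_ud.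
Proof.
  have [d0 [Hd0 H0]] := local_step thick0.
  set e1 := d0 / 2.
  have [Hp1 HG1] := H0 e1 ltac:(rewrite /e1 Rabs_pos_eq; lra).
  rewrite Rplus_0_l in Hp1 HG1.
  have [d1 [Hd1 H1]] := local_step Hp1.
  set e2 := Rmin d1 (d0 / 2) / 2.
  have He2p : 0 < e2 by apply: Rdiv_lt_0_compat; [apply: Rmin_glb_lt; lra | lra].
  have He2a : e2 < d1 by have := Rmin_l d1 (d0 / 2); rewrite /e2; lra.
  have He2b : e2 <= d0 / 4 by have := Rmin_r d1 (d0 / 2); rewrite /e2; lra.
  have [_ HG2] := H1 e2 ltac:(rewrite Rabs_pos_eq; lra).
  have [_ HG3] := H0 (e1 + e2) ltac:(rewrite Rabs_pos_eq /e1; lra).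
  rewrite Rplus_0_l in HG3; rewrite HG3 HG1 in HG2.
  have He1p : 0 < e1 by rewrite /e1; lra.
  clearbody e1 e2.
  have : 2 * e1 * e2 * (curv + w_ud) = 0 by nra.
  have : e1 * e2 <> 0 by nra.
  nra.
Qed.

Definition defect s := wrad s - curv * (s * s).

Lemma defect_locally_const s : thick s -> exists dl, 0 < dl /\
  forall e, Rabs e < dl -> thick (s + e) /\ defect (s + e) = defect s.
Proof.
  move=> Hp; have [dl [Hdl H]] := local_step Hp.
  exists dl; split => // e He; have [Hp' HG] := H e He; split => //.
  by rewrite /defect HG curv_eq; ring.
Qed.

Lemma defect_const s1 : 0 <= s1 -> thick s1 -> defect s1 = defect 0.
Proof.
  move=> Hs1 Hp1.
  pose A x := 0 <= x <= s1 /\ forall y, 0 <= y <= x -> defect y = defect 0.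
  have HA0 : A 0 by split; [lra | move=> y Hy; have -> : y = 0 by lra].
  have Hbd : bound A by exists s1 => x [Hx _]; lra.
  have [m Hm] := completeness A Hbd (ex_intro _ 0 HA0); case: (Hm) => Hub Hlub.
  have Hm0 : 0 <= m by apply: Hub.
  have Hm1 : m <= s1 by apply: Hlub => x [Hx _]; lra.
  have [dl [Hdl Hloc]] := defect_locally_const (thick_down Hp1 (conj Hm0 Hm1)).
  have [x [HAx Hx]] := lub_approx Hm Hdl.
  have Hxm : x <= m by apply: Hub.
  (* defect is constant up to m + dl/2 (or s1), so m is not below s1 *)
  have Hnear : forall y, x <= y < m + dl -> defect y = defect m.
  { move=> y Hy; have [_ Hq] := Hloc (y - m) ltac:(apply: Rabs_def1; lra).
    by replace (m + (y - m)) with y in Hq by ring. }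
  have Hdm : defect m = defect 0.
  { by rewrite -(Hnear x) ?(proj2 HAx); case: HAx; lra. }
  have HA' : A (Rmin (m + dl / 2) s1).
  { split; first by split; [apply: Rmin_glb; lra | apply: Rmin_r].
    move=> y [Hy0 Hy]; have Hy2 := Rle_trans _ _ _ Hy (Rmin_l _ _).
    case: (Rle_lt_dec y x) => Hyx; first by apply: (proj2 HAx); lra.
    by rewrite Hnear //; lra. }
  have := Hub _ HA'.
  case: (Rle_lt_dec (m + dl / 2) s1) => Hc; first by rewrite Rmin_left //; lra.
  rewrite Rmin_right; last lra.
  by move=> Hs1m; have -> : s1 = m by lra.
Qed.

Definition g0 := wrad 0.

Lemma wrad_pos s : thick s -> 0 < wrad s.
Proof. by move=> [_ Hr]; apply: Rmult_lt_0_compat; [exact: kappa_pos | nra]. Qed.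

Lemma g0_pos : 0 < g0.
Proof. exact: wrad_pos thick0. Qed.

Lemma wrad_formula s : 0 <= s -> thick s -> wrad s = g0 + curv * (s * s).
Proof. by move=> Hs Hp; have := defect_const Hs Hp; rewrite /defect /g0; lra. Qed.

Lemma adm_bound : exists B, forall s, adm0 s -> s <= B.
Proof.
  have [M HM] := K0_bounded.
  exists (M * M * dot u u + 1) => s HE.
  have Hn := HM _ HE.
  have HM0 : 0 <= M by apply: Rle_trans Hn; apply: sqrt_pos.
  move/(vnorm_le _ HM0): Hn; rewrite /axis_pt dot_scall dot_scalr => Hn.
  have : s * s <= M * M * dot u u.
  { have := Rmult_le_compat_r (dot u u) _ _ (Rlt_le _ _ uu_pos) Hn.
    by have -> : s / dot u u * (s / dot u u * dot u u) * dot u u = s * s by field; lra. }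
  nra.
Qed.

Lemma closed_probe s0 m :
  (forall dl, 0 < dl -> exists s, Rabs (s0 - s) < dl /\ K0 (probe s m)) -> K0 (probe s0 m).
Proof.
  move=> H; apply: K0_closed => eps Heps.
  set mn := Rmin 1 (dot u u).
  have Hmn0 : 0 < mn by apply: Rmin_glb_lt; lra.
  have Hmn1 : mn <= 1 by apply: Rmin_l.
  have Hmn2 : mn <= dot u u by apply: Rmin_r.
  have Hmn3 : mn * mn <= dot u u by nra.
  clearbody mn.
  have [s [Hs HK]] := H (eps * mn) ltac:(nra).
  exists (probe s m); split => //; apply: vnorm_lt => //.
  have -> : vsub (probe s0 m) (probe s m) = vscale ((s0 - s) / dot u u) u.
  { by apply: functional_extensionality => i; rewrite /vsub /probe /vadd /axis_pt /vscale; field; lra. }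
  rewrite dot_scall dot_scalr.
  have Hsq : (s0 - s) * (s0 - s) < eps * eps * dot u u.
  { have -> : (s0 - s) * (s0 - s) = Rabs (s0 - s) * Rabs (s0 - s).
    { by rewrite -Rabs_mult Rabs_pos_eq //; apply: Rle_0_sqr. }
    have := Rabs_pos (s0 - s); move: (Rabs (s0 - s)) Hs => A Hs HA.
    have : A * A < (eps * mn) * (eps * mn) by nra.
    nra. }
  have -> : (s0 - s) / dot u u * ((s0 - s) / dot u u * dot u u)
          = (s0 - s) * (s0 - s) / dot u u by field; lra.
  apply: (Rmult_lt_reg_r (dot u u)) => //.
  by have -> : (s0 - s) * (s0 - s) / dot u u * dot u u = (s0 - s) * (s0 - s) by field; lra.
Qed.

Lemma probe_at_sup (A : R -> Prop) m mu : is_lub A m ->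
  (forall x, A x -> K0 (probe x mu)) -> K0 (probe m mu).
Proof.
  move=> Hm HA; apply: closed_probe => dl Hdl.
  have [x [HAx Hx]] := lub_approx Hm Hdl.
  exists x; split; last exact: HA.
  by have Hxm := proj1 Hm _ HAx; rewrite Rabs_pos_eq; lra.
Qed.

(* Beyond the thick heights the quadratic g0 + curv s^2 is nonpositive:
   otherwise wrad would stay bounded below up to the supremum m of the thick
   heights, a probe at fixed distance would reach height m by closedness, and
   m would be thick in its interior. *)
Lemma notthick_le s : 0 <= s -> ~ thick s -> g0 + curv * (s * s) <= 0.
Proof.
  move=> Hs Hnp; apply: Rnot_lt_le => Hpos.
  pose A x := 0 <= x /\ thick x.
  have [B HB] := adm_bound.
  have Hbd : bound A by exists B => x [_ [HE _]]; apply: HB.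
  have [m Hm] := completeness A Hbd (ex_intro _ 0 (conj (Rle_refl 0) thick0)).
  have HAs : forall x, A x -> x < s.
  { by move=> x [Hx Hp]; apply: Rnot_le_lt => Hsx; apply: Hnp; apply: (thick_down Hp); lra. }
  have Hm0 : 0 <= m by apply: (proj1 Hm); split; [lra | exact: thick0].
  set cm := Rmin g0 (g0 + curv * (s * s)).
  have Hcm : 0 < cm by have := g0_pos => h; apply: Rmin_glb_lt; lra.
  have HGx : forall x, A x -> cm <= wrad x.
  { move=> x [Hx Hp]; rewrite wrad_formula //.
    have Hxs := HAs x (conj Hx Hp).
    case: (Rle_lt_dec 0 curv) => Hc.
    - by apply: Rle_trans (Rmin_l _ _) _; nra.
    - apply: Rle_trans (Rmin_r _ _) _; have : x * x <= s * s by nra.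
      nra. }
  have [mu [Hmu Hmuz]] :=
    @small_sq (dot z z) (cm / kappa) ltac:(lra) ltac:(apply: Rdiv_lt_0_compat => //; exact: kappa_pos).
  have HKx : forall x, A x -> K0 (probe x mu).
  { move=> x HAx; apply/probe_char; split; first by case: HAx => _ [].
    suff : cm / kappa <= rad0 x * rad0 x by lra.
    apply: (Rmult_le_reg_l kappa); first exact: kappa_pos.
    have -> : kappa * (cm / kappa) = cm by field; have := kappa_pos; lra.
    exact: HGx. }
  have Hpm := thick_of_probe (probe_at_sup Hm HKx) ltac:(lra).
  have [dl [Hdl Hloc]] := defect_locally_const Hpm.
  have [Hp2 _] := Hloc (dl / 2) ltac:(rewrite Rabs_pos_eq; lra).
  have HA2 : A (m + dl / 2) by split => //; lra.
  by have := proj1 Hm _ HA2; lra.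
Qed.

Lemma adm_ge s : 0 <= s -> adm0 s -> 0 <= g0 + curv * (s * s).
Proof.
  move=> Hs HE; apply: Rnot_lt_le => Hlt.
  have Hk := g0_pos.
  have Hs0 : 0 < s.
  { apply: Rnot_le_lt => Hs0; have E0 : s = 0 by lra.
    by rewrite E0 in Hlt; nra. }
  have Hc1 : curv < 0 by nra.
  have Hcs : 0 < - curv * (s * s) by nra.
  (* g0 = q (-curv s^2) with 0 < q < 1; take th^2 >= q with th < 1 *)
  set q := g0 / (- curv * (s * s)).
  have Hkq : g0 = q * (- curv * (s * s)) by rewrite /q; field; nra.
  clearbody q.
  have Hq0 : 0 < q by nra.
  have Hq1 : q < 1 by nra.
  set th := (1 + q) / 2.
  have Hth : 0 <= th < 1 by rewrite /th; lra.
  have Hth2 : q <= th * th by rewrite /th; nra.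
  clearbody th.
  have Hp := thick_of_adm HE Hth.
  have HG := wrad_pos Hp.
  have Hts : 0 <= th * s by nra.
  rewrite (wrad_formula Hts Hp) in HG.
  have : g0 <= - curv * (s * s) * (th * th) by rewrite Hkq; nra.
  nra.
Qed.

(* Non-admissible heights s >= 0 satisfy g0 + curv s^2 < 0: at a root s of the
   quadratic, nearby smaller heights are thick, so s is admissible by
   closedness. *)
Lemma notadm_lt s : 0 <= s -> ~ adm0 s -> g0 + curv * (s * s) < 0.
Proof.
  move=> Hs HnE.
  have Hle : g0 + curv * (s * s) <= 0 by apply: notthick_le => // -[].
  case: (Rle_lt_or_eq_dec _ _ Hle) => // Heq; exfalso.
  have Hk := g0_pos.
  have Hs0 : 0 < s.
  { apply: Rnot_le_lt => Hs0; have E0 : s = 0 by lra.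
    by rewrite E0 in Heq; nra. }
  have Hc1 : curv < 0 by nra.
  apply: HnE; rewrite /adm0 -probe0; apply: closed_probe => dl Hdl.
  set al := Rmin (1 / 2) (dl / (s + 1)).
  have Hal0 : 0 < al by apply: Rmin_glb_lt; [lra | apply: Rdiv_lt_0_compat; lra].
  have Hal1 : al <= 1 / 2 by apply: Rmin_l.
  have Hal2 : al * (s + 1) <= dl.
  { have : al <= dl / (s + 1) by apply: Rmin_r.
    move=> h; have := Rmult_le_compat_r (s + 1) _ _ ltac:(lra) h.
    by have -> : dl / (s + 1) * (s + 1) = dl by field; lra. }
  clearbody al.
  have Hpos' : 0 <= (1 - al) * s by nra.
  exists ((1 - al) * s); split; first by rewrite Rabs_pos_eq; nra.
  rewrite probe0; apply: NNPP => HnE'.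
  have := notthick_le Hpos' (fun Hp => HnE' (proj1 Hp)).
  have Hg0 : g0 = - curv * (s * s) by lra.
  have -> : g0 + curv * ((1 - al) * s * ((1 - al) * s))
          = (- curv * (s * s)) * (al * (2 - al)) by rewrite Hg0; ring.
  have : 0 < - curv * (s * s) by nra.
  have : 0 < al * (2 - al) by nra.
  move=> h1 h2; have := Rmult_lt_0_compat _ _ h2 h1; lra.
Qed.

Lemma K0_quadric_pos x : 0 <= dot x u ->
  (K0 x <-> kappa * perp2 u x - curv * (dot x u * dot x u) <= g0).
Proof.
  move=> Hs; rewrite K0_char.
  have Hps := perp2_ge0 x uu_pos.
  have Hk := kappa_pos.
  move: (dot x u) Hs => s Hs; split.
  - move=> [HE Hle]; case: (classic (thick s)) => Hp.
    + have := wrad_formula Hs Hp; rewrite /wrad => HG.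
      have : kappa * perp2 u x <= kappa * (rad0 s * rad0 s) by apply: Rmult_le_compat_l; lra.
      lra.
    + have Hr : rad0 s = 0.
      { apply: Rle_antisym; last exact: rad0_ge0.
        by apply: Rnot_lt_le => Hlt; apply: Hp. }
      rewrite Hr in Hle.
      have H1 := notthick_le Hs Hp; have H2 := adm_ge Hs HE.
      have -> : perp2 u x = 0 by lra.
      lra.
  - move=> Hq; case: (classic (adm0 s)) => HE; last first.
    { have := notadm_lt Hs HE; have : 0 <= kappa * perp2 u x by apply: Rmult_le_pos; lra.
      lra. }
    split => //; case: (classic (thick s)) => Hp.
    + have := wrad_formula Hs Hp; rewrite /wrad => HG.
      by apply: (Rmult_le_reg_l kappa) => //; lra.
    + have H1 := notthick_le Hs Hp.
      have : perp2 u x <= 0.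
      { apply: Rnot_lt_le => Hlt; have : 0 < kappa * perp2 u x by apply: Rmult_lt_0_compat.
        lra. }
      have : 0 <= rad0 s * rad0 s by apply: Rle_0_sqr.
      lra.
Qed.

Lemma K0_quadric x : K0 x <-> kappa * perp2 u x - curv * (dot x u * dot x u) <= g0.
Proof.
  case: (Rle_lt_dec 0 (dot x u)) => Hs; first exact: K0_quadric_pos.
  have K0_opp : K0 x <-> K0 (vopp x).
  { split; first exact: K0_symmetric.
    move/K0_symmetric; have -> // : vopp (vopp x) = x.
    by apply: functional_extensionality => i; rewrite /vopp; ring. }
  rewrite K0_opp K0_quadric_pos; last by rewrite dot_oppl; lra.
  by rewrite perp2_opp dot_oppl; have -> : - dot x u * - dot x u = dot x u * dot x u by ring.
Qed.

(* The quadric is bounded, so it is an ellipsoid of revolution: curv < 0. *)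
Lemma curv_neg : curv < 0.
Proof.
  apply: Rnot_le_lt => Hc.
  have [B HB] := adm_bound.
  set s := Rmax B 0 + 1.
  have HE : adm0 s.
  { rewrite /adm0; apply/K0_quadric; rewrite perp2_axis_pt // dot_axis_pt //.
    have := g0_pos; have : 0 <= curv * (s * s) by apply: Rmult_le_pos => //; apply: Rle_0_sqr.
    lra. }
  by have := HB _ HE; rewrite /s; have := Rmax_l B 0; lra.
Qed.

Lemma K0_is_quadric : exists a c k, 0 < a /\ c < 0 /\ 0 < k /\
  forall x, K0 x <-> a * perp2 u x - c * (dot x u * dot x u) <= k.
Proof.
  exists kappa, curv, g0.
  by split; [exact: kappa_pos | split; [exact: curv_neg | split; [exact: g0_pos | exact: K0_quadric]]].
Qed.

End TwoAxes.

(* From the quadric to an ellipsoid.  Lmap a b u y = a y + b <y,u> u is linear,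
   these maps compose within their family, and they diagonalise the quadratic
   forms p |x|^2 + q <x,u>^2. *)
Definition Lmap n (a b : R) (u y : vec n) : vec n := vadd (vscale a y) (vscale (b * dot y u) u).

Lemma Lmap_comp n a b a' b' (u y : vec n) :
  Lmap a b u (Lmap a' b' u y) = Lmap (a * a') (a * b' + b * a' + b * b' * dot u u) u y.
Proof.
  rewrite /Lmap dot_addl !dot_scall.
  by apply: functional_extensionality => i; rewrite /vadd /vscale; ring.
Qed.

Lemma Lmap_id n (u y : vec n) : Lmap 1 0 u y = y.
Proof. by apply: functional_extensionality => i; rewrite /Lmap /vadd /vscale; ring. Qed.

Lemma Lmap_dot n a b (u y : vec n) :
  dot (Lmap a b u y) (Lmap a b u y)
  = a * a * dot y y + (2 * a * b + b * b * dot u u) * (dot y u * dot y u).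
Proof. by rewrite /Lmap !dot_addl !dot_addr !dot_scall !dot_scalr (dotC u y); ring. Qed.

Lemma Lmap_add n a b (u x y : vec n) : Lmap a b u (vadd x y) = vadd (Lmap a b u x) (Lmap a b u y).
Proof.
  by rewrite /Lmap dot_addl; apply: functional_extensionality => i; rewrite /vadd /vscale; ring.
Qed.
Lemma Lmap_scal n a b (u : vec n) c x : Lmap a b u (vscale c x) = vscale c (Lmap a b u x).
Proof.
  by rewrite /Lmap dot_scall; apply: functional_extensionality => i; rewrite /vadd /vscale; ring.
Qed.

Lemma quadric_normal_form n (u : vec n) p q : 0 < dot u u -> 0 < p -> 0 < p + q * dot u u ->
  exists a b a' b', (forall y, Lmap a b u (Lmap a' b' u y) = y) /\
    (forall y, Lmap a' b' u (Lmap a b u y) = y) /\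
    forall x, dot (Lmap a b u x) (Lmap a b u x) = p * dot x x + q * (dot x u * dot x u).
Proof.
  move=> Hu Hp Hpq.
  (* a = sqrt p scales the orthogonal part, a + b <u,u> = sqrt (p + q <u,u>) the axis *)
  set al := sqrt p.
  have Hal : 0 < al by apply: sqrt_lt_R0.
  have Hal2 : al * al = p by rewrite /al sqrt_sqrt; lra.
  set ga := sqrt (p + q * dot u u).
  have Hga : 0 < ga by apply: sqrt_lt_R0.
  have Hga2 : ga * ga = p + q * dot u u by rewrite /ga sqrt_sqrt; lra.
  set be := (ga - al) / dot u u.
  have Hbe : al + be * dot u u = ga by rewrite /be; field; lra.
  clearbody al ga be.
  exists al, be, (/ al), (- be / (al * ga)); split; [|split].
  - move=> y; rewrite Lmap_comp -{2}(Lmap_id u y); f_equal; first by field; lra.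
    by rewrite -Hbe; field; rewrite Hbe; split; lra.
  - move=> y; rewrite Lmap_comp -{2}(Lmap_id u y); f_equal; first by field; lra.
    by rewrite -Hbe; field; rewrite Hbe; split; lra.
  - move=> x; rewrite Lmap_dot Hal2.
    have -> // : 2 * al * be + be * be * dot u u = q.
    apply: (Rmult_eq_reg_r (dot u u)); last lra.
    have : (al + be * dot u u) * (al + be * dot u u) = p + q * dot u u by rewrite Hbe.
    nra.
Qed.

Lemma ellipsoid_of_linear_image n (K K0 : vset n) (A B : 'I_n -> 'I_n -> R) (D L : vec n -> vec n) :
  (forall x, lin B (lin A x) = x /\ lin A (lin B x) = x) -> same_set K (Defs.image A K0) ->
  (forall x y, D (vadd x y) = vadd (D x) (D y)) -> (forall c x, D (vscale c x) = vscale c (D x)) ->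
  (forall x y, L (vadd x y) = vadd (L x) (L y)) -> (forall c x, L (vscale c x) = vscale c (L x)) ->
  (forall y, D (L y) = y) -> (forall y, L (D y) = y) ->
  (forall x, K0 x <-> dot (D x) (D x) <= 1) -> ellipsoid K.
Proof.
  move=> HAB HK Dadd Dscal Ladd Lscal HDL HLD HK0.
  (* the ellipsoid matrix is A L, with inverse D B *)
  have HC := @mat_of_lin n (fun y => lin A (L y))
    ltac:(by move=> x y /=; rewrite Ladd lin_add) ltac:(by move=> c x /=; rewrite Lscal lin_scal).
  have HCinv := @mat_of_lin n (fun x => D (lin B x))
    ltac:(by move=> x y /=; rewrite lin_add Dadd) ltac:(by move=> c x /=; rewrite lin_scal Dscal).
  have vadd0 : forall v : vec n, vadd v (@vzero n) = v.
  { by move=> v; apply: functional_extensionality => i; rewrite /vadd /vzero; ring. }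
  exists (mat_of (fun y => lin A (L y))), (@vzero n); split.
  - exists (mat_of (fun x => D (lin B x))) => x; split.
    + by rewrite HC HCinv /= (proj1 (HAB _)) HDL.
    + by rewrite HCinv HC /= HLD (proj2 (HAB _)).
  - move=> x; rewrite HK; split.
    + move=> [x0 [HKx0 ->]]; exists (D x0); split.
      * by rewrite vnorm_le ?Rmult_1_r; [apply/HK0 | lra].
      * by rewrite HC HLD vadd0.
    + move=> [y [Hy ->]]; exists (L y); split.
      * by apply/HK0; rewrite HDL -(Rmult_1_r 1) -vnorm_le //; lra.
      * by rewrite HC vadd0.
Qed.

Lemma ellipsoid_of_quadric n (K K0 : vset n) (A B : 'I_n -> 'I_n -> R) (u : vec n) a c k :
  (forall x, lin B (lin A x) = x /\ lin A (lin B x) = x) ->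
  same_set K (Defs.image A K0) -> 0 < dot u u -> 0 < a -> c < 0 -> 0 < k ->
  (forall x, K0 x <-> a * perp2 u x - c * (dot x u * dot x u) <= k) ->
  ellipsoid K.
Proof.
  move=> HAB HK Hu Ha Hc Hk HK0.
  set p := a / k.
  set q := (- c - a / dot u u) / k.
  have Hp : 0 < p by apply: Rdiv_lt_0_compat.
  have Hpq : 0 < p + q * dot u u.
  { have -> : p + q * dot u u = (- c) * dot u u / k by rewrite /p /q; field; lra.
    by apply: Rdiv_lt_0_compat => //; nra. }
  have [al [be [al' [be' [HDL [HLD HD]]]]]] := quadric_normal_form Hu Hp Hpq.
  apply: (ellipsoid_of_linear_image HAB HK (@Lmap_add n al be u) (@Lmap_scal n al be u)
            (@Lmap_add n al' be' u) (@Lmap_scal n al' be' u) HDL HLD) => x.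
  have Hform : (p * dot x x + q * (dot x u * dot x u)) * k
             = a * perp2 u x - c * (dot x u * dot x u) by rewrite /perp2 /p /q; field; lra.
  rewrite HK0 HD; split => H.
  - by apply: (Rmult_le_reg_r k) => //; lra.
  - by have := Rmult_le_compat_r k _ _ (Rlt_le _ _ Hk) H; lra.
Qed.

Lemma transfer_map n (K K0 K1 : vset n) (A1 B1 A2 B2 : 'I_n -> 'I_n -> R) :
  (forall x, lin B1 (lin A1 x) = x /\ lin A1 (lin B1 x) = x) ->
  (forall x, lin B2 (lin A2 x) = x /\ lin A2 (lin B2 x) = x) ->
  same_set K (Defs.image A1 K0) -> same_set K (Defs.image A2 K1) ->
  forall x, K0 x <-> K1 (lin B2 (lin A1 x)).
Proof.
  move=> HB1 HB2 HK1 HK2 x; split => Hx.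
  - have : K (lin A1 x) by apply/HK1; exists x.
    by move/HK2 => [y [Hy ->]]; rewrite (proj1 (HB2 y)).
  - have : K (lin A2 (lin B2 (lin A1 x))) by apply/HK2; exists (lin B2 (lin A1 x)).
    rewrite (proj2 (HB2 _)); move/HK1 => [y [Hy Hxy]].
    by rewrite -(proj1 (HB1 x)) Hxy (proj1 (HB1 y)).
Qed.

(* If the axes were compatible (nu parallel to u), N would carry u^perp onto
   u1^perp, and the two hyperplanes of revolution would coincide. *)
Lemma distinct_hyperplanes_not_parallel n (H1 H2 : vset n) (A1 B1 A2 B2 : 'I_n -> 'I_n -> R)
    (u u1 nu : vec n) :
  (forall x, lin B1 (lin A1 x) = x /\ lin A1 (lin B1 x) = x) ->
  (forall x, lin B2 (lin A2 x) = x /\ lin A2 (lin B2 x) = x) ->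
  same_set H1 (Defs.image A1 (orth_hyperplane u)) ->
  same_set H2 (Defs.image A2 (orth_hyperplane u1)) ->
  0 < dot u1 u1 -> (forall x, dot (lin B2 (lin A1 x)) u1 = dot x nu) ->
  ~ same_set H1 H2 -> not_parallel nu u.
Proof.
  move=> HB1 HB2 HH1 HH2 Hu1 Hnu Hne c Hc; apply: Hne.
  have Ht : forall x, dot (lin B2 (lin A1 x)) u1 = c * dot x u.
  { by move=> x; rewrite Hnu /dot -sum_scal; apply: sum_ext => j; rewrite Hc; ring. }
  have HNw : forall w, lin B2 (lin A1 (lin B1 (lin A2 w))) = w.
  { by move=> w; rewrite (proj2 (HB1 _)) (proj1 (HB2 _)). }
  have Hc0 : c <> 0.
  { by move=> Hc0; have := Ht (lin B1 (lin A2 u1)); rewrite HNw Hc0; lra. }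
  move=> y; rewrite HH1 HH2; split.
  - move=> [x [Hx ->]]; exists (lin B2 (lin A1 x)); split.
    + by rewrite /orth_hyperplane Ht Hx; ring.
    + by rewrite (proj2 (HB2 _)).
  - move=> [w [Hw ->]]; exists (lin B1 (lin A2 w)); split; last by rewrite (proj2 (HB1 _)).
    have := Ht (lin B1 (lin A2 w)); rewrite HNw.
    rewrite /orth_hyperplane in Hw *; rewrite Hw => H0.
    by apply: (Rmult_eq_reg_l c); lra.
Qed.

Lemma lin_comp_pos n (A1 B1 A2 B2 : 'I_n -> 'I_n -> R) (z : vec n) :
  (forall x, lin B1 (lin A1 x) = x) -> (forall x, lin A2 (lin B2 x) = x) ->
  0 < dot z z -> 0 < dot (lin B2 (lin A1 z)) (lin B2 (lin A1 z)).
Proof.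
  move=> BA1 AB2 Hzz; case: (Rle_lt_dec (dot (lin B2 (lin A1 z)) (lin B2 (lin A1 z))) 0) => // Hle.
  have H0 := dot_zero (Rle_antisym _ _ Hle (dot_ge0 _)).
  have Hz : z = @vzero n by rewrite -(BA1 z) -(AB2 (lin A1 z)) H0 !lin_zero.
  by move: Hzz; rewrite Hz /dot big1 /vzero => [|i _]; [lra | ring].
Qed.

Theorem mainTheorem9 (n : nat) (K : vset n) (H1 H2 : vset n) :
  is_true (leq 3 n) ->
  affine_symmetric_body_of_revolution K ->
  hyperplane_of_revolution K H1 ->
  hyperplane_of_revolution K H2 ->
  ~ same_set H1 H2 ->
  ellipsoid K.
Proof.
  move=> Hn _ [A1 [K0 [u [[B1 HB1] [[[[Hconv [Hclos [Hbnd Hint]]] Hsym] Hax0] [HK1 HH1]]]]]].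
  move=> [A2 [K1 [u1 [[B2 HB2] [[_ Hax1] [HK2 HH2]]]]]] Hne.
  pose N x := lin B2 (lin A1 x).
  have HN := transfer_map HB1 HB2 HK1 HK2.
  have Nadd : forall x y, N (vadd x y) = vadd (N x) (N y) by move=> x y; rewrite /N !lin_add.
  have Nscal : forall a x, N (vscale a x) = vscale a (N x) by move=> a x; rewrite /N !lin_scal.
  have [nu Hnu] : exists nu, forall x, dot (N x) u1 = dot x nu.
  { by apply: linf_dot; split => [x y | a x]; rewrite ?Nadd ?Nscal ?dot_addl ?dot_scall. }
  have Hnot := distinct_hyperplanes_not_parallel HB1 HB2 HH1 HH2 (dot_pos (proj1 Hax1)) Hnu Hne.
  have [z [Hzu [Hzn Hzz]]] := common_kernel_vector Hn (proj1 Hax0) Hnot.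
  have HNz := lin_comp_pos (fun x => proj1 (HB1 x)) (fun x => proj2 (HB2 x)) Hzz.
  have [d [Hdu [Hdn Hdz]]] := separating_vector (proj1 Hax0) Hnot Hzu Hzn.
  have [a [c [k [Ha [Hc [Hk Hquad]]]]]] :=
    K0_is_quadric Hconv Hclos Hbnd Hint Hsym Hax0 Hax1 HN Nadd Nscal Hnu Hzu Hzn Hzz HNz Hdu Hdn Hdz.
  exact: (ellipsoid_of_quadric HB1 HK1 (dot_pos (proj1 Hax0)) Ha Hc Hk Hquad).
Qed.
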